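(* Let $n \ge 1$, let $x, y$ be binary words of the same length, and let $a, b, a', b' \in \{0,1\}$ with $a = 0$ or $a' = 0$. If $D(x,y) \ge n$ and $D(xa', yb') \ge n$, then $D(xa'a, yb'b) \ge n$.
   Context: For a binary word $x = x_1\cdots x_\ell$, $[x] = \sum_{j=1}^{\ell} x_j F_{\ell-j+2}$ where $F_0=0,F_1=1,F_k=F_{k-1}+F_{k-2}$. For words $u,v$, $D(u,v) = [v] - n[u]$. *)

From mathcomp Require Import all_boot all_order all_algebra.
Set Implicit Arguments. Unset Strict Implicit. Unset Printing Implicit Defensive.
Import GRing.Theory Num.Theory.

Fixpoint fib (k : nat) : nat :=
  match k with
  | 0 => 0
  | 1 => 1
  | (m.+1 as k') .+1 => fib k' + fib m
  end.

(* [x] = sum_{j=1}^{l} x_j F_{l-j+2}; with 0-based index j this is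
   sum_{j<l} x_j F_{l-j+1}. Binary words are seq bool (true = 1). *)
Definition word_val (x : seq bool) : nat :=
  \sum_(j < size x) (nth false x j) * fib (size x - j + 1).

Definition D (n : nat) (u v : seq bool) : int :=
  (word_val v)%:Z - (n%:Z * (word_val u)%:Z)%R.

From mathcomp Require Import all_boot all_order all_algebra.
From mathcomp Require Import zify.
Import GRing.Theory Num.Theory.
Local Open Scope ring_scope.

(* The Fibonacci recurrence lifts to words: [x c d] = [x c] + [x] + c + d.
   Hence D is additive over the two appended letters,
   D(x a' a, y b' b) = D(x a', y b') + D(x, y) + (b' + b) - n (a' + a),
   and when at most one of a, a' is 1 the last term costs at most n, so the
   two hypotheses D >= n leave D(x a' a, y b' b) >= 2n - n = n. *)

Definition fib_sum (k : nat) (x : seq bool) : nat :=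
  (\sum_(j < size x) nth false x j * fib (size x - j + k))%N.

Lemma word_valE x : word_val x = fib_sum 1 x.
Proof. by []. Qed.

Lemma fib_sum_rcons k x c :
  fib_sum k (rcons x c) = (fib_sum k.+1 x + c * fib k.+1)%N.
Proof.
rewrite /fib_sum size_rcons big_ord_recr /= nth_rcons ltnn eqxx subSnn.
congr (_ + _)%N; apply: eq_bigr => i _.
by rewrite nth_rcons ltn_ord subSn ?(ltnW (ltn_ord i)) // addSn addnS.
Qed.

Lemma fib_sumSS k x : fib_sum k.+2 x = (fib_sum k.+1 x + fib_sum k x)%N.
Proof.
rewrite /fib_sum -big_split /=; apply: eq_bigr => i _.
by rewrite -mulnDr !addnS.
Qed.

Lemma word_val_rcons2 x c d :
  word_val (rcons (rcons x c) d) = (word_val (rcons x c) + word_val x + c + d)%N.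
Proof.
by rewrite !word_valE !fib_sum_rcons fib_sumSS /= !muln1; lia.
Qed.

Lemma D_rcons2 n x y c d c' d' :
  D n (rcons (rcons x c) d) (rcons (rcons y c') d') =
  D n (rcons x c) (rcons y c') + D n x y + (c' + d')%N%:Z - n%:Z * (c + d)%N%:Z.
Proof. by rewrite /D !word_val_rcons2 !PoszD !mulrDr; lia. Qed.

Theorem lemma10 (n : nat) (x y : seq bool) (a b a' b' : bool) :
  (1 <= n)%N -> size x = size y -> (a = false \/ a' = false) ->
  n%:Z <= D n x y ->
  n%:Z <= D n (rcons x a') (rcons y b') ->
  n%:Z <= D n (rcons (rcons x a') a) (rcons (rcons y b') b).
Proof.
move=> _ _ a_or_a' Dxy Dxy'.
have one_letter : (a' + a <= 1)%N by case: a_or_a' => -> /=; rewrite ?addn0 leq_b1.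
rewrite D_rcons2.
have : n%:Z * (a' + a)%N%:Z <= n%:Z by rewrite ler_piMr // lez_nat.
lia.
Qed.
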